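(* In the setting of the context, let $d\ge1$ be such that $\mathcal E_m\subset d\mathbb Z$ for every $m\ge1$. Then for every $j\ge1$ and all integers $\alpha,\beta$ with $P_j(\{\alpha\})>0$ and $P_j(\{\beta\})>0$, $\alpha-\beta$ is a multiple of $d$.
   Context: Let $\pi_m\ge2$ ($m\ge1$) be integers and $\eta_{m,i}\ge0$ ($m\ge1$, $0\le i\le\pi_m-1$) integers; write $\eta_m:i\mapsto\eta_{m,i}$. $\overline Y=\prod_{m\ge1}\{0,\dots,\pi_m-1\}$ with product uniform measure $\overline\nu$ and odometer $\overline S$ (add $1$ to the first coordinate with carry to the right). $\gamma(\overline y)=\sum_{m=1}^{\overline t(\overline y)}\eta_{m,\overline y_m}$ where $\overline t(\overline y)$ is the smallest $t\ge1$ with $\overline y_t<\pi_t-1$. $P_j$ is the distribution under $\overline\nu$ of $\gamma+\gamma\circ\overline S+\dots+\gamma\circ\overline S^{j-1}$. $\mathcal S_m=\eta_m(\{0,\dots,\pi_m-2\})\cup\big(\eta_{m,\pi_m-1}+\eta_{m+1}(\{0,\dots,\pi_{m+1}-2\})\big)$, $\mathcal E_m=\mathcal S_m-\mathcal S_m$. *)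

(* Indices are 0-based: paper index m >= 1 is index m-1 here. *)
From Stdlib Require Import Reals.
From mathcomp Require Import all_boot all_algebra.
Set Implicit Arguments. Unset Strict Implicit. Unset Printing Implicit Defensive.

(* Odometer on \bar Y (sequences y : nat -> nat, coordinate m < pi m):
   add 1 to the first coordinate with carry to the right. *)
Definition odo (pi : nat -> nat) (y : nat -> nat) : nat -> nat :=
  fun m => if all (fun i => y i == (pi i).-1) (iota 0 m)
           then (if y m == (pi m).-1 then 0 else (y m).+1) else y m.

Definition odo_iter (pi : nat -> nat) (k : nat) (y : nat -> nat) := iter k (odo pi) y.

(* first index t < n with y t < pi t - 1 (0-based version of \bar t);
   returns n if there is none below n *)
Definition tpos (pi : nat -> nat) (n : nat) (y : nat -> nat) : nat :=
  find (fun t => y t < (pi t).-1) (iota 0 n).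

(* gamma(y) = sum_{m <= t(y)} eta_{m, y_m}, computed from the first n coords;
   correct whenever tpos pi n y < n *)
Definition gamma_upto (pi : nat -> nat) (eta : nat -> nat -> nat) (n : nat)
  (y : nat -> nat) : nat :=
  \sum_(m < (tpos pi n y).+1) eta m (y m).

(* the j values gamma(S^k y), k < j, are all determined by the first n coords *)
Definition determined (pi : nat -> nat) (j n : nat) (y : nat -> nat) : bool :=
  all (fun k => has (fun t => odo_iter pi k y t < (pi t).-1) (iota 0 n)) (iota 0 j).

Definition Psum (pi : nat -> nat) (eta : nat -> nat -> nat) (j n : nat)
  (y : nat -> nat) : nat :=
  \sum_(k < j) gamma_upto pi eta n (odo_iter pi k y).

Fixpoint prefixes (pi : nat -> nat) (n : nat) : seq (seq nat) :=
  match n with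
  | 0 => [:: [::]]
  | n'.+1 => [seq rcons p x | p <- prefixes pi n', x <- iota 0 (pi n')]
  end.

Definition ext (p : seq nat) : nat -> nat := fun i => nth 0 p i.

(* the cylinder of prefix p lies in the event {sum = alpha} (determined at level n) *)
Definition good (pi : nat -> nat) (eta : nat -> nat -> nat) (j : nat) (alpha : int)
  (n : nat) (p : seq nat) : bool :=
  determined pi j n (ext p) && (Posz (Psum pi eta j n (ext p)) == alpha).

(* product-measure of the union of the level-n cylinders contained in the event *)
Definition Papprox (pi : nat -> nat) (eta : nat -> nat -> nat) (j : nat)
  (alpha : int) (n : nat) : R :=
  Rdiv (INR (count (good pi eta j alpha n) (prefixes pi n)))
       (INR (\prod_(i < n) pi i)%N).

Definition Pset pi eta j alpha : R -> Prop :=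
  fun r => exists n, r = Papprox pi eta j alpha n.

Lemma size_prefixes pi n : size (prefixes pi n) = (\prod_(i < n) pi i)%N.
Proof.
elim: n => [|n IH] /=; first by rewrite big_ord0.
by rewrite size_allpairs IH size_iota big_ord_recr.
Qed.

Lemma Papprox_le1 pi eta j alpha n : Rle (Papprox pi eta j alpha n) R1.
Proof.
rewrite /Papprox -size_prefixes.
set c := count _ _; set N := size _.
have hc : (c <= N)%N by apply: count_size.
case: N hc => [|N] hc.
  move: hc; rewrite leqn0 => /eqP ->; rewrite /Rdiv /= Rmult_0_l; exact: Rle_0_1.
have hN : Rlt 0 (INR N.+1) by apply: lt_0_INR; apply/ltP.
apply: (Rmult_le_reg_r (INR N.+1)) => //.
rewrite /Rdiv Rmult_assoc Rinv_l; last by apply: Rgt_not_eq.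
rewrite Rmult_1_r Rmult_1_l; apply: le_INR; exact/leP.
Qed.

Lemma Pset_bound pi eta j alpha : bound (Pset pi eta j alpha).
Proof. by exists R1 => r [n ->]; apply: Papprox_le1. Qed.

Lemma Pset_inhab pi eta j alpha : exists r, Pset pi eta j alpha r.
Proof. by exists (Papprox pi eta j alpha 0); exists 0. Qed.

(* P_j({alpha}) = \bar nu({ y : sum_{k<j} gamma(S^k y) = alpha }) : the event is,
   up to a null set, the increasing union over n of the level-n cylinders above,
   so its measure is the supremum of their measures. *)
Definition Pj (pi : nat -> nat) (eta : nat -> nat -> nat) (j : nat) (alpha : int) : R :=
  proj1_sig (completeness _ (Pset_bound pi eta j alpha) (Pset_inhab pi eta j alpha)).

Definition Sset (pi : nat -> nat) (eta : nat -> nat -> nat) (m : nat) : seq nat :=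
  [seq eta m i | i <- iota 0 (pi m).-1] ++
  [seq eta m (pi m).-1 + eta m.+1 i | i <- iota 0 (pi m.+1).-1].

From Stdlib Require Import Reals Classical.
From mathcomp Require Import all_boot all_algebra.
From mathcomp Require Import zify.

Set Implicit Arguments.
Unset Strict Implicit.
Unset Printing Implicit Defensive.

(* Every element of S_m is congruent mod d to eta_{m,0}.  For a point y with
   t = t(y), gamma(y) = sum_{m<t} eta_{m,pi_m-1} + eta_{t,y_t}; grouping
   eta_{m,pi_m-1} with eta_{m+1,0} (an element of S_m) telescopes the sum, so
   gamma(y) = eta_{0,0} mod d whenever y lies in the odometer space.  Hence
   the j-fold ergodic sum only takes values congruent to j * eta_{0,0}, and any
   atom of P_j is such a value. *)

Lemma dvdz_natB_eqmod (d a b : nat) :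
  ((Posz a - Posz b)%R \in dvdz d) = (a == b %[mod d]).
Proof. by rewrite -eqz_mod_dvd !modz_nat. Qed.

Lemma eqmodD (d a1 b1 a2 b2 : nat) :
  a1 = b1 %[mod d] -> a2 = b2 %[mod d] -> a1 + a2 = b1 + b2 %[mod d].
Proof. by move=> e1 e2; rewrite -modnDm e1 e2 modnDm. Qed.

Definition admissible (pi : nat -> nat) (y : nat -> nat) := forall m, y m < pi m.

Section Odometer.
Variable pi : nat -> nat.
Hypothesis pi_gt0 : forall m, 0 < pi m.

Lemma odo_admissible y : admissible pi y -> admissible pi (odo pi y).
Proof.
move=> Hy m; rewrite /odo; case: ifP => _; last exact: Hy.
have := Hy m; have := pi_gt0 m; case: eqP => /=; lia.
Qed.

Lemma odo_iter_admissible k y : admissible pi y -> admissible pi (odo_iter pi k y).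
Proof. by rewrite /odo_iter; elim: k => [|k IH] Hy //=; apply/odo_admissible/IH. Qed.

Lemma prefixesP n p : p \in prefixes pi n ->
  size p = n /\ {in gtn n, forall i, nth 0 p i < pi i}.
Proof.
elim: n p => [|n IH] p /=; first by rewrite inE => /eqP ->.
case/allpairsP => -[q x] [/= /IH [sz_q q_lt] x_lt ->].
split=> [|i]; first by rewrite size_rcons sz_q.
rewrite mem_iota in x_lt; rewrite !inE nth_rcons sz_q ltnS leq_eqVlt.
by case: ltngtP => // [i_lt | ->] _; [exact: q_lt | lia].
Qed.

Lemma ext_prefix_admissible n p : p \in prefixes pi n -> admissible pi (ext p).
Proof.
case/prefixesP => sz_p p_lt m; rewrite /ext.
by case: (ltnP m n) => [|m_ge]; [exact: p_lt | rewrite nth_default ?sz_p].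
Qed.

End Odometer.

Section Congruence.
Variables (pi : nat -> nat) (eta : nat -> nat -> nat) (d : nat).
Hypothesis pi_ge2 : forall m, 1 < pi m.
Hypothesis Sset_eqmod : forall m a b, a \in Sset pi eta m -> b \in Sset pi eta m ->
  (Posz a - Posz b)%R \in dvdz d.

Let pi_gt0 m : 0 < pi m. Proof. exact: ltnW. Qed.

Lemma mem_Sset_digit m i : i < (pi m).-1 -> eta m i \in Sset pi eta m.
Proof. by move=> i_lt; rewrite mem_cat (map_f (eta m)) // mem_iota. Qed.

Lemma mem_Sset_carry m : eta m (pi m).-1 + eta m.+1 0 \in Sset pi eta m.
Proof.
rewrite mem_cat orbC (map_f (fun i => eta m (pi m).-1 + eta m.+1 i)) //.
by rewrite mem_iota; have := pi_ge2 m.+1; lia.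
Qed.

Lemma Sset_eqmod_digit0 m a : a \in Sset pi eta m -> a = eta m 0 %[mod d].
Proof.
move=> Sa; apply/eqP; rewrite -dvdz_natB_eqmod (Sset_eqmod Sa) //.
by apply: mem_Sset_digit; have := pi_ge2 m; lia.
Qed.

Lemma carries_eqmod t : \sum_(m < t) eta m (pi m).-1 + eta t 0 = eta 0 0 %[mod d].
Proof.
elim: t => [|t IH]; first by rewrite big_ord0.
rewrite big_ord_recr -addnA -IH /=.
exact/eqmodD/Sset_eqmod_digit0/mem_Sset_carry.
Qed.

Lemma gamma_upto_eqmod n y : admissible pi y ->
  has (fun t => y t < (pi t).-1) (iota 0 n) -> gamma_upto pi eta n y = eta 0 0 %[mod d].
Proof.
move=> Hy has_t; rewrite /gamma_upto; set t := tpos pi n y.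
have t_lt : t < n by move: has_t; rewrite has_find size_iota.
have max_below m : m < t -> y m = (pi m).-1.
  move=> m_lt; have := before_find 0 m_lt; rewrite nth_iota ?add0n; last lia.
  by have := Hy m; lia.
have yt_lt : y t < (pi t).-1 by have := nth_find 0 has_t; rewrite nth_iota.
rewrite big_ord_recr -(carries_eqmod t) /=.
apply/eqmodD/Sset_eqmod_digit0/mem_Sset_digit => //.
by rewrite (eq_bigr (fun m : 'I_t => eta m (pi m).-1)) // => m _; rewrite max_below.
Qed.

Lemma Psum_eqmod j n y : admissible pi y -> determined pi j n y ->
  Psum pi eta j n y = j * eta 0 0 %[mod d].
Proof.
move=> Hy /allP det_y; rewrite /Psum.
elim: j det_y => [|j IH] det_y; first by rewrite big_ord0.
rewrite big_ord_recr mulSnr; apply: eqmodD.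
  by apply: IH => k; rewrite !mem_iota => k_lt; apply: det_y; rewrite mem_iota; lia.
apply/gamma_upto_eqmod/det_y; first exact: (odo_iter_admissible pi_gt0 _ Hy).
by rewrite mem_iota /=; lia.
Qed.

End Congruence.

Lemma Pj_gt0_good pi eta j alpha : Rlt 0 (Pj pi eta j alpha) ->
  exists n p, p \in prefixes pi n /\ good pi eta j alpha n p.
Proof.
rewrite /Pj; case: completeness => l [_ l_least] /= l_gt0.
have [n Papprox_gt0] : exists n, Rlt 0 (Papprox pi eta j alpha n).
  apply: NNPP => none_gt0; apply: (Rlt_not_le _ _ l_gt0); apply: l_least.
  by move=> r [n ->]; apply: Rnot_lt_le => r_gt0; apply: none_gt0; exists n.
have : 0 < count (good pi eta j alpha n) (prefixes pi n).
  move: Papprox_gt0; rewrite /Papprox; case: count => //.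
  by rewrite /Rdiv /= Rmult_0_l => /Rlt_irrefl.
by rewrite -has_count => /hasP [p p_in p_good]; exists n, p.
Qed.

Lemma Pj_gt0_eqmod pi eta (d : nat) j alpha :
  (forall m, 1 < pi m) ->
  (forall m a b, a \in Sset pi eta m -> b \in Sset pi eta m ->
     (Posz a - Posz b)%R \in dvdz d) ->
  Rlt 0 (Pj pi eta j alpha) -> exists2 a, alpha = Posz a & a = j * eta 0 0 %[mod d].
Proof.
move=> pi_ge2 Sset_eqmod /Pj_gt0_good [n [p [p_in /andP [det_p /eqP <-]]]].
exists (Psum pi eta j n (ext p)) => //; apply: Psum_eqmod => //.
by apply: ext_prefix_admissible p_in => m; apply: ltnW.
Qed.

Theorem mainTheorem17 (pi : nat -> nat) (eta : nat -> nat -> nat)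
  (Hpi : forall m, (2 <= pi m)%N) (d : nat) (Hd : (1 <= d)%N)
  (HE : forall m a b, a \in Sset pi eta m -> b \in Sset pi eta m ->
          (Posz a - Posz b)%R \in dvdz (Posz d))
  (j : nat) (Hj : (1 <= j)%N) (alpha beta : int)
  (Ha : Rlt 0 (Pj pi eta j alpha)) (Hb : Rlt 0 (Pj pi eta j beta)) :
  (alpha - beta)%R \in dvdz (Posz d).
Proof.
have [a -> a_eqmod] := Pj_gt0_eqmod Hpi HE Ha.
have [b -> b_eqmod] := Pj_gt0_eqmod Hpi HE Hb.
by rewrite dvdz_natB_eqmod a_eqmod b_eqmod.
Qed.
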